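(* For every integer $m\ge0$, the following identity of rational functions in indeterminates $x,y$ holds: $$\frac{(1-x^{m+1})(1-y^{m+1})}{(1-x)^{m+1}(1-y)^{m+1}}=\sum_{r=0}^{m}\sum_{s=0}^{m-r}\frac{m+1}{m+1-r-s}\binom{m-r}{s}\binom{m-s}{r}\frac{x^ry^s}{(1-x)^{r+s}(1-y)^{r+s}}.$$ Equivalently, for every integer $m\ge1$, $$(1-x^m)(1-y^m)=\sum_{k=0}^{m-1}\sum_{i=0}^{k}\frac{m}{m-k}\binom{m-k+i-1}{i}\binom{m-i-1}{k-i}x^iy^{k-i}(1-x)^{m-k}(1-y)^{m-k}.$$ *)

From mathcomp Require Import all_boot all_order all_algebra.
Set Implicit Arguments. Unset Strict Implicit. Unset Printing Implicit Defensive.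

From mathcomp Require Import all_boot all_order all_algebra.
From mathcomp Require Import ring zify.
Import GRing.Theory.
Set Implicit Arguments.
Unset Strict Implicit.
Unset Printing Implicit Defensive.
Local Open Scope ring_scope.

(* Work in F[X] modulo X^m and let w be a polynomial congruent to
   (1-x)(1-y)X / ((1-xX)(1-yX)). Then 1 - w = (1-X)(1-xyX) / ((1-xX)(1-yX)), so
   w'/(1-w) = \sum_(n<m) w^n w' is the logarithmic derivative
   1/(1-X) - x/(1-xX) - y/(1-yX) + xy/(1-xyX), whose coefficient of X^(m-1) is
   (1-x^m)(1-y^m). Termwise, [X^(m-1)] w^n w' = m/(n+1) [X^m] w^(n+1), and
   expanding w^(n+1) with the negative binomial series gives the double sum. The
   rational form follows by dividing by ((1-x)(1-y))^m and reindexing the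
   triangle of summation. *)

Lemma hockey_stick j k : (\sum_(i < k.+1) 'C(j + i, i))%N = 'C(j.+1 + k, k).
Proof.
elim: k => [|k IH]; first by rewrite big_ord1 !bin0.
by rewrite big_ord_recr /= IH !addnS addSn binS addnC.
Qed.

Lemma dvdp_subM (R : idomainType) (d a a' b b' : {poly R}) :
  d %| a - a' -> d %| b - b' -> d %| a * b - a' * b'.
Proof.
move=> daa dbb; have -> : a * b - a' * b' = (a - a') * b + a' * (b - b') by ring.
by apply: dvdp_add; [apply: dvdp_mulr | apply: dvdp_mull].
Qed.

Lemma sum_triangle_antidiag (V : nmodType) (f : nat -> nat -> V) m :
  \sum_(k < m.+1) \sum_(i < k.+1) f i (k - i)%N =
  \sum_(r < m.+1) \sum_(s < (m - r).+1) f r s.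
Proof.
elim: m => [|m IH]; first by rewrite !big_ord1.
rewrite big_ord_recr /= IH [RHS]big_ord_recr /= subnn big_ord1.
have -> : \sum_(r < m.+1) \sum_(s < (m.+1 - r).+1) f r s =
          \sum_(r < m.+1) (\sum_(s < (m - r).+1) f r s + f r (m.+1 - r)%N).
  by apply: eq_bigr => r _; rewrite subSn ?big_ord_recr // -ltnS.
by rewrite big_split /= -addrA; congr (_ + _); rewrite big_ord_recr /= subnn.
Qed.

Lemma coef_exp_deriv (R : comNzRingType) (p : {poly R}) n k :
  (p ^+ n * p^`())`_k *+ n.+1 = (p ^+ n.+1)`_k.+1 *+ k.+1.
Proof. by rewrite -coef_deriv deriv_exp coefMn mulrC. Qed.

Section TruncatedGeometric.
Variable F : fieldType.
Implicit Types (a : F) (n : nat).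

Definition geom_poly a n : {poly F} := \poly_(i < n) a ^+ i.

Lemma mul_geom_poly a n :
  (1 - a%:P * 'X) * geom_poly a n = 1 - (a ^+ n)%:P * 'X^n.
Proof.
elim: n => [|n IH]; first by rewrite /geom_poly poly_def big_ord0 mulr0 expr0 mul1r subrr.
rewrite /geom_poly poly_def big_ord_recr -poly_def mulrDr IH -mul_polyC /=.
by rewrite !rmorphXn /= !exprS; ring.
Qed.

Lemma dvdXn_mul_geom_poly a n : 'X^n %| (1 - a%:P * 'X) * geom_poly a n - 1.
Proof. by rewrite mul_geom_poly addrAC subrr sub0r dvdpNr dvdp_mull. Qed.

Lemma dvdXn_deriv_geom_poly a n :
  'X^n %| 'X * (1 - a%:P * 'X) ^+ 2 * (geom_poly a n)^`() - a%:P * 'X.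
Proof.
case: n => [|n]; first by rewrite dvd1p.
set q := geom_poly a n.+1.
have dq : (1 - a%:P * 'X) * q^`() = a%:P * q - (a ^+ n.+1)%:P * ('X^n * n.+1%:R).
  move: (congr1 deriv (mul_geom_poly a n.+1)); rewrite -/q !derivE -mulr_natr.
  by rewrite !sub0r mulr1 => <-; ring.
have -> : 'X * (1 - a%:P * 'X) ^+ 2 * q^`() - a%:P * 'X =
    a%:P * 'X * ((1 - a%:P * 'X) * q - 1)
    - 'X^(n.+1) * ((a ^+ n.+1)%:P * (1 - a%:P * 'X) * n.+1%:R).
  have -> : 'X * (1 - a%:P * 'X) ^+ 2 * q^`() =
            'X * (1 - a%:P * 'X) * ((1 - a%:P * 'X) * q^`()) by ring.
  by rewrite dq (exprS 'X); ring.
by apply: dvdp_sub; [apply/dvdp_mull/dvdXn_mul_geom_poly | apply/dvdp_mulr/dvdpp].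
Qed.

Lemma coef_geom_polyX a n j k : (k < n)%N ->
  (geom_poly a n ^+ j.+1)`_k = 'C(j + k, k)%:R * a ^+ k.
Proof.
elim: j k => [|j IH] k kn; first by rewrite expr1 coef_poly kn binn mul1r.
rewrite exprSr coefM -hockey_stick natr_sum mulr_suml; apply: eq_bigr => i _.
have ik : (i <= k)%N by rewrite -ltnS.
rewrite IH ?(leq_ltn_trans ik kn) // coef_poly (leq_ltn_trans (leq_subr i k) kn).
by rewrite -mulrA -exprD subnKC.
Qed.

End TruncatedGeometric.

Lemma coef_dvdXn (F : fieldType) (p : {poly F}) n k :
  'X^n %| p -> (k < n)%N -> p`_k = 0.
Proof. by case/dvdpP=> q -> kn; rewrite coefMXn kn. Qed.

Section CrossSeries.
Variables (F : fieldType) (x y : F) (m : nat).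

(* Congruent to (1-x)(1-y)X / ((1-xX)(1-yX)) modulo X^(m+1). *)
Definition cross_series : {poly F} :=
  ((1 - x) * (1 - y))%:P * ('X * (geom_poly x m * geom_poly y m)).

Local Notation w := cross_series.
Let A (a : F) : {poly F} := (1 - a%:P * 'X) * geom_poly a m.
Let D : {poly F} := (1 - x%:P * 'X) * (1 - y%:P * 'X).
Let E : {poly F} := (1 - 'X) * (1 - x%:P * y%:P * 'X).
Let u : {poly F} := (1 - x%:P) * (1 - y%:P).
Let c : {poly F} := 1 - x%:P * y%:P * 'X ^+ 2.

Let wE : w = u * ('X * (geom_poly x m * geom_poly y m)).
Proof. by rewrite /cross_series /u polyCM !polyCB polyC1. Qed.

Lemma dvdXn_one_sub_cross_series : 'X^m %| (1 - w) * D - E.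
Proof.
have -> : (1 - w) * D - E = - (u * 'X) * (A x * A y - 1 * 1) by rewrite wE /A /D /E /u; ring.
by rewrite dvdp_mull // dvdp_subM ?dvdXn_mul_geom_poly.
Qed.

Lemma dvdXn_cross_series_exp : 'X^m %| w ^+ m.
Proof. by rewrite wE mulrCA exprMn dvdp_mulr. Qed.

Let S := \sum_(n < m) w ^+ n.

Lemma dvdXn_geom_sum_cross_series : 'X^m %| S * E - D.
Proof.
have geom : S * (1 - w) = 1 - w ^+ m.
  by rewrite -opprB mulrN mulrC -subrX1 opprB.
have -> : S * E - D = - (S * ((1 - w) * D - E)) + (S * (1 - w) - 1) * D by ring.
rewrite geom addrAC subrr sub0r mulNr.
apply: dvdp_add; rewrite ?dvdpNr.
  exact/dvdp_mull/dvdXn_one_sub_cross_series.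
exact/dvdp_mulr/dvdXn_cross_series_exp.
Qed.

Lemma dvdXn_deriv_cross_series : 'X^m %| D ^+ 2 * w^`() - u * c.
Proof.
set qx := geom_poly x m; set qy := geom_poly y m.
have dw : w^`() = u * (qx * qy + 'X * (qx^`() * qy + qx * qy^`())).
  by rewrite wE !derivE -/qx -/qy; ring.
set Hx := 'X * (1 - x%:P * 'X) ^+ 2 * qx^`().
set Hy := 'X * (1 - y%:P * 'X) ^+ 2 * qy^`().
have -> : D ^+ 2 * w^`() - u * c =
    u * (D * (A x * A y - 1 * 1) + (1 - y%:P * 'X) * (A y * Hx - 1 * (x%:P * 'X))
         + (1 - x%:P * 'X) * (A x * Hy - 1 * (y%:P * 'X))).
  by rewrite dw /A /D /c /Hx /Hy -/qx -/qy; ring.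
apply/dvdp_mull/dvdp_add; first apply/dvdp_add; apply/dvdp_mull/dvdp_subM;
  by rewrite ?dvdXn_mul_geom_poly ?dvdXn_deriv_geom_poly.
Qed.

(* Modulo X^m, V = 1/(1-X) - x/(1-xX) - y/(1-yX) + xy/(1-xyX). *)
Let V : {poly F} := geom_poly 1 m - x%:P * geom_poly x m - y%:P * geom_poly y m
  + (x * y)%:P * geom_poly (x * y) m.

Lemma dvdXn_log_deriv_cross_series : 'X^m %| V * (E * D) - u * c.
Proof.
have -> : V * (E * D) - u * c =
    (A 1 - 1) * ((1 - x%:P * y%:P * 'X) * D)
    - x%:P * (A x - 1) * ((1 - 'X) * (1 - x%:P * y%:P * 'X) * (1 - y%:P * 'X))
    - y%:P * (A y - 1) * ((1 - 'X) * (1 - x%:P * y%:P * 'X) * (1 - x%:P * 'X))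
    + x%:P * y%:P * (A (x * y) - 1) * ((1 - 'X) * D).
  by rewrite /V /A /D /E /u /c !polyCM polyC1; ring.
have dA a : 'X^m %| A a - 1 by exact: dvdXn_mul_geom_poly.
apply: dvdp_add; first (apply: dvdp_sub; first apply: dvdp_sub);
  by apply: dvdp_mulr; rewrite ?dvdp_mull ?dA.
Qed.

Lemma dvdXn_geom_sum_deriv_cross_series : 'X^m %| S * w^`() - V.
Proof.
have cop : coprimep 'X^m (E * D).
  rewrite coprimep_expl // coprimep_sym coprimepX /root /E /D !hornerE /=.
  by rewrite !subr0 !mulr1 oner_eq0.
rewrite -(Gauss_dvdpl _ cop).
have -> : (S * w^`() - V) * (E * D) =
    (S * E - D) * (D * w^`()) + (D ^+ 2 * w^`() - u * c) - (V * (E * D) - u * c) by ring.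
rewrite dvdp_sub ?dvdXn_log_deriv_cross_series // dvdp_add ?dvdXn_deriv_cross_series //.
exact/dvdp_mulr/dvdXn_geom_sum_cross_series.
Qed.

Lemma coef_geom_sum_deriv_cross_series : (0 < m)%N ->
  ((\sum_(n < m) w ^+ n) * w^`())`_m.-1 = (1 - x ^+ m) * (1 - y ^+ m).
Proof.
move=> m_gt0.
have := coef_dvdXn (k := m.-1) dvdXn_geom_sum_deriv_cross_series.
rewrite ltn_predL coefB => /(_ m_gt0)/eqP; rewrite subr_eq0 => /eqP ->.
rewrite /V !coefD !coefN !coefCM !coef_poly ltn_predL m_gt0 expr1n -!exprS prednK //.
by rewrite exprMn; ring.
Qed.

Lemma coef_cross_series_exp n k : (k < m)%N ->
  (w ^+ n.+1)`_(n.+1 + k) = (1 - x) ^+ n.+1 * (1 - y) ^+ n.+1 *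
    \sum_(i < k.+1) 'C(n + i, i)%:R * x ^+ i * ('C(n + (k - i), k - i)%:R * y ^+ (k - i)).
Proof.
move=> km; rewrite /cross_series !exprMn -rmorphXn coefCM coefXnM ltnNge leq_addr /=.
rewrite addKn coefM -exprMn; congr (_ * _); apply: eq_bigr => i _.
have ik : (i <= k)%N by rewrite -ltnS.
by rewrite !coef_geom_polyX // (leq_ltn_trans _ km) ?leq_subr.
Qed.

End CrossSeries.

Lemma bivariate_expansion (F : fieldType) (charF0 : [pchar F] =i pred0) p (x y : F) :
  (1 - x ^+ p.+1) * (1 - y ^+ p.+1) = \sum_(k < p.+1) \sum_(i < k.+1)
     (p.+1)%:R / (p.+1 - k)%:R * ('C(p.+1 - k + i - 1, i))%:R * ('C(p.+1 - i - 1, k - i))%:R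
     * x ^+ i * y ^+ (k - i) * (1 - x) ^+ (p.+1 - k) * (1 - y) ^+ (p.+1 - k).
Proof.
rewrite -(coef_geom_sum_deriv_cross_series x y (ltn0Sn p)) mulr_suml coef_sum.
rewrite [RHS](reindex_inj rev_ord_inj); apply: eq_bigr => n _ /=.
have np : (n <= p)%N by rewrite -ltnS.
set w := cross_series x y p.+1.
have n1_neq0 : (n.+1)%:R != 0 :> F by have /pcharf0P -> := charF0.
have -> : (w ^+ n * w^`())`_p = (p.+1)%:R / (n.+1)%:R * (w ^+ n.+1)`_(n.+1 + (p - n)).
  rewrite addSn subnKC // -[LHS](mulfK n1_neq0) !mulr_natr coef_exp_deriv; ring.
rewrite coef_cross_series_exp ?ltnS ?leq_subr // !subSS.
have -> : (p.+1 - (p - n) = n.+1)%N by lia.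
rewrite !mulr_sumr.
apply: eq_bigr => i _; have ip : (i <= p - n)%N by rewrite -ltnS.
have -> : (n.+1 + i - 1 = n + i)%N by lia.
have -> : (p.+1 - i - 1 = n + (p - n - i))%N by lia.
ring.
Qed.

Theorem corollary2p6 (F : fieldType) (hF : [pchar F] =i pred0) :
  forall (m : nat) (x y : F),
    (x != 1 -> y != 1 ->
      (1 - x ^+ m.+1) * (1 - y ^+ m.+1)
        / ((1 - x) ^+ m.+1 * (1 - y) ^+ m.+1)
      = \sum_(r < m.+1) \sum_(s < (m - r).+1)
          (m.+1)%:R / (m.+1 - r - s)%:R
          * ('C(m - r, s))%:R * ('C(m - s, r))%:R
          * (x ^+ r * y ^+ s / ((1 - x) ^+ (r + s) * (1 - y) ^+ (r + s))))
    /\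
    ((0 < m)%N ->
      (1 - x ^+ m) * (1 - y ^+ m)
      = \sum_(k < m) \sum_(i < k.+1)
          m%:R / (m - k)%:R
          * ('C(m - k + i - 1, i))%:R * ('C(m - i - 1, k - i))%:R
          * x ^+ i * y ^+ (k - i) * (1 - x) ^+ (m - k) * (1 - y) ^+ (m - k)).
Proof.
move=> m x y; split; last by case: m => [//|p] _; exact: bivariate_expansion.
move=> x_neq1 y_neq1.
rewrite bivariate_expansion // mulr_suml.
rewrite -(sum_triangle_antidiag (fun r s => (m.+1)%:R / (m.+1 - r - s)%:R
  * ('C(m - r, s))%:R * ('C(m - s, r))%:R
  * (x ^+ r * y ^+ s / ((1 - x) ^+ (r + s) * (1 - y) ^+ (r + s))))).
apply: eq_bigr => k _; rewrite mulr_suml; apply: eq_bigr => i _.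
have ik : (i <= k)%N by rewrite -ltnS.
have km : (k <= m)%N by rewrite -ltnS.
have -> : (m.+1 - k + i - 1 = m - (k - i))%N by lia.
have -> : (m.+1 - i - 1 = m - i)%N by lia.
have -> : (m.+1 - i - (k - i) = m.+1 - k)%N by lia.
have split_pow (a : F) : a ^+ m.+1 = a ^+ (m.+1 - k) * a ^+ k.
  by rewrite -exprD subnK ?leqW.
rewrite subnKC // [(1 - x) ^+ m.+1]split_pow [(1 - y) ^+ m.+1]split_pow.
have x1 : 1 - x != 0 by rewrite subr_eq0 eq_sym.
have y1 : 1 - y != 0 by rewrite subr_eq0 eq_sym.
have mk : (m.+1 - k)%:R != 0 :> F.
  by have /pcharf0P -> := hF; rewrite subn_eq0 -ltnNge ltnS.
by field; rewrite mk !expf_neq0.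
Qed.
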